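(* Let $W,S,A$ be finite sets, let $\beta\in\Delta_{W,S}$ be a Markov kernel $\beta(s|w)$, and let $f_\beta\colon\Delta_{S,A}\to\Delta_{W,A}$ be the linear map $\pi(a|s)\mapsto\sum_s\beta(s|w)\pi(a|s)$. Let $U=\{s\in S\colon|\operatorname{supp}(\beta(s|\cdot))|>1\}$ be the set of sensor states that can be obtained from several world states. Then the set $G=f_\beta(\Delta_{S,A})$ can be written as $G=\bigcup_{\theta\in\Theta}G_\theta$ for some index set $\Theta$, where each $G_\theta$ is a Cartesian product of convex sets, $G_\theta=\prod_{w\in W}G_{\theta,w}$ with each $G_{\theta,w}\subseteq\Delta_A$ convex, and each vertex of $G_\theta$ lies in a face of $G$ of dimension at most $|U|(|A|-1)$.
   Context: $\Delta_X$ is the probability simplex on a finite set $X$; $\Delta_{X,Y}=\prod_{x\in X}\Delta_Y$ is the polytope of Markov kernels $p(y|x)$ from $X$ to $Y$. $\operatorname{supp}(\beta(s|\cdot))=\{w\in W\colon\beta(s|w)>0\}$. $G$ is a polytope (image of a polytope under a linear map). *)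

From mathcomp Require Import all_boot all_order all_algebra.
Set Implicit Arguments. Unset Strict Implicit. Unset Printing Implicit Defensive.
Import Order.TTheory GRing.Theory Num.Theory.
Local Open Scope ring_scope.

Definition simplex (R : realFieldType) (A : finType) (p : A -> R) : Prop :=
  (forall a, 0 <= p a) /\ \sum_(a : A) p a = 1.

(* Markov kernels Delta_{X,Y} = prod_{x in X} Delta_Y, written k x y = k(y|x). *)
Definition kernel (R : realFieldType) (X Y : finType) (k : X -> Y -> R) : Prop :=
  forall x, simplex (k x).

Definition fbeta (R : realFieldType) (W S A : finType)
  (beta : W -> S -> R) (pi : S -> A -> R) : W -> A -> R :=
  fun w a => \sum_(s : S) beta w s * pi s a.

Definition Gset (R : realFieldType) (W S A : finType) (beta : W -> S -> R)
  (g : W -> A -> R) : Prop :=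
  exists pi : S -> A -> R, kernel pi /\ g = fbeta beta pi.

Definition Uset (R : realFieldType) (W S : finType) (beta : W -> S -> R) : {set S} :=
  [set s | (1 < #|[set w | (0 < beta w s)%R]|)%N ].

Definition convex_set (R : realFieldType) (A : finType) (C : (A -> R) -> Prop) : Prop :=
  forall x y t, C x -> C y -> 0 <= t <= 1 ->
    C (fun a => t * x a + (1 - t) * y a).

Definition vertex (R : realFieldType) (W A : finType) (C : (W -> A -> R) -> Prop)
  (x : W -> A -> R) : Prop :=
  C x /\ forall y z t, C y -> C z -> 0 < t < 1 ->
    x = (fun w a => t * y w a + (1 - t) * z w a) -> y = x /\ z = x.

(* F is a face of the polytope G (faces of a polytope are exactly the sets
   G cap {l = c} for linear functionals l with l <= c on G; this includes
   G itself and the empty face). *)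
Definition face (R : realFieldType) (W A : finType) (G F : (W -> A -> R) -> Prop) : Prop :=
  exists (l : W -> A -> R) (c : R),
    (forall y, G y -> \sum_(w : W) \sum_(a : A) l w a * y w a <= c) /\
    (forall x, F x <-> (G x /\ \sum_(w : W) \sum_(a : A) l w a * x w a = c)).

Definition affdim_le (R : realFieldType) (W A : finType) (F : (W -> A -> R) -> Prop)
  (d : nat) : Prop :=
  exists (x0 : W -> A -> R) (v : 'I_d -> W -> A -> R),
    forall x, F x -> exists c : 'I_d -> R,
      forall w a, x w a = x0 w a + \sum_(i < d) c i * v i w a.

(* Call a sensor state s private if it is seen (beta(s|w) > 0) from a single
   world state w.  A point g of G either has a representation g = f_beta(pi) in
   which pi puts mass on two actions at some observed private state s, or all
   its representations are deterministic on observed private states.  In the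
   first case, moving mass between the two actions moves g along an open
   segment changing only the row g(w).  In the second case a Farkas certificate
   gives a linear functional, maximised over G at g, that penalises mass on the
   actions pi does not use at private states; on the face it cuts out every
   representation therefore agrees with pi off U, so the face is parametrised
   by the rows pi(.|s), s in U, and has dimension at most |U|(|A|-1).  Taking
   the singleton {g} in the second case and the open segment in the first
   (which has no vertices) yields the decomposition. *)

From mathcomp Require Import all_boot all_order all_algebra.
From mathcomp Require Import ring lra.
From Stdlib Require Import FunctionalExtensionality Classical.
Set Implicit Arguments. Unset Strict Implicit. Unset Printing Implicit Defensive.
Import Order.TTheory GRing.Theory Num.Theory.
Local Open Scope ring_scope.

Lemma sum_delta (R : nzSemiRingType) (I : finType) (k : I) (F : I -> R) :
  \sum_i (i == k)%:R * F i = F k.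
Proof.
rewrite -(big_pred1_eq (@GRing.add R) k) big_mkcond; apply: eq_bigr => i _.
by case: eqP; rewrite ?mul1r ?mul0r.
Qed.

Lemma sum_delta1 (R : nzSemiRingType) (I : finType) (k : I) :
  \sum_i (i == k)%:R = 1 :> R.
Proof. by rewrite -[RHS](sum_delta k (fun _ => 1)); apply: eq_bigr => i _; rewrite mulr1. Qed.

Lemma sum_unit (R : nmodType) (F : unit -> R) : \sum_(i : unit) F i = F tt.
Proof. by rewrite (bigD1 tt) //= big1 ?addr0 // => -[]. Qed.

Lemma sum_pair (R : nmodType) (I1 I2 : finType) (F : I1 * I2 -> R) :
  \sum_p F p = \sum_i \sum_j F (i, j).
Proof. by rewrite pair_bigA; apply: eq_bigr => -[]. Qed.

Lemma convex_combination_in_interval (R : realFieldType) (t1 t2 s : R) :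
  -1 < t1 < 1 -> -1 < t2 < 1 -> 0 <= s <= 1 -> -1 < s * t1 + (1 - s) * t2 < 1.
Proof.
move=> /andP [? ?] /andP [? ?] /andP [s_ge0 s_le1]; rewrite -subr_ge0 in s_le1.
have [d_ge0 | /ltW d_le0] := lerP 0 (t1 - t2).
  have := mulr_ge0 s_ge0 d_ge0; have := mulr_ge0 s_le1 d_ge0.
  by move=> ? ?; apply/andP; split; nra.
rewrite -oppr_ge0 in d_le0.
have := mulr_ge0 s_ge0 d_le0; have := mulr_ge0 s_le1 d_le0.
by move=> ? ?; apply/andP; split; nra.
Qed.

(** * Farkas' lemma *)

Section Farkas.
Variables (R : realFieldType) (J : finType).

Definition lp_feasible (I : finType) (a : I -> J -> R) (b : I -> R) :=
  exists x : J -> R, forall i, \sum_j a i j * x j <= b i.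

Definition farkas_certificate (I : finType) (a : I -> J -> R) (b : I -> R) :=
  exists y : I -> R, (forall i, 0 <= y i) /\
    (forall j, \sum_i y i * a i j = 0) /\ \sum_i y i * b i < 0.

Lemma farkas_zero_matrix (I : finType) (a : I -> J -> R) b :
  (forall i j, a i j = 0) -> lp_feasible a b \/ farkas_certificate a b.
Proof.
move=> a0; have [/existsP [i0 bi0] | /existsPn b_ge0] := boolP [exists i, b i < 0].
  right; exists (fun i => (i == i0)%:R); split; first by move=> i; rewrite ler0n.
  by split=> [j|]; rewrite sum_delta ?a0.
left; exists (fun _ => 0) => i; rewrite big1 => [|j _]; last by rewrite mulr0.
by rewrite leNgt b_ge0.
Qed.

Section FourierMotzkin.
Variables (I : finType) (a : I -> J -> R) (j0 : J).

(* Fourier-Motzkin elimination of the variable [j0]: rows with a zero [j0]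
   coefficient are kept, and every pair of a positive and a negative row is
   replaced by the positive combination cancelling [j0]. *)
Definition fm_lam (p : I * I) : R :=
  if (a p.1 j0 == 0) && (p.1 == p.2) then 1
  else if (0 < a p.1 j0) && (a p.2 j0 < 0) then - a p.2 j0 else 0.

Definition fm_mu (p : I * I) : R :=
  if (a p.1 j0 == 0) && (p.1 == p.2) then 0
  else if (0 < a p.1 j0) && (a p.2 j0 < 0) then a p.1 j0 else 0.

Definition fm_comb (F : I -> R) (p : I * I) := fm_lam p * F p.1 + fm_mu p * F p.2.

Lemma fm_lam_ge0 p : 0 <= fm_lam p.
Proof.
rewrite /fm_lam; case: ifP => _ //; case: ifP => // /andP [_ h].
by rewrite oppr_ge0 ltW.
Qed.

Lemma fm_mu_ge0 p : 0 <= fm_mu p.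
Proof.
by rewrite /fm_mu; case: ifP => _ //; case: ifP => // /andP [h _]; rewrite ltW.
Qed.

Lemma fm_comb_pivot p : fm_comb (fun i => a i j0) p = 0.
Proof.
rewrite /fm_comb /fm_lam /fm_mu; case: ifP => [/andP [/eqP -> _]|_].
  by rewrite mulr0 mul0r addr0.
by case: ifP => _; [ring | rewrite !mul0r addr0].
Qed.

Definition fm_pullback (y : I * I -> R) (i : I) : R :=
  \sum_p y p * (fm_lam p * (i == p.1)%:R + fm_mu p * (i == p.2)%:R).

Lemma fm_pullback_ge0 y : (forall p, 0 <= y p) -> forall i, 0 <= fm_pullback y i.
Proof.
move=> y_ge0 i; apply: sumr_ge0 => p _; apply: mulr_ge0 => //.
by apply: addr_ge0; apply: mulr_ge0; rewrite ?fm_lam_ge0 ?fm_mu_ge0 ?ler0n.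
Qed.

Lemma fm_pullbackE y (F : I -> R) :
  \sum_i fm_pullback y i * F i = \sum_p y p * fm_comb F p.
Proof.
under eq_bigr do rewrite mulr_suml.
rewrite exchange_big /=; apply: eq_bigr => p _.
under eq_bigr do rewrite -mulrA.
rewrite -mulr_sumr /fm_comb; congr (_ * _).
rewrite -[F p.1](sum_delta p.1) -[F p.2](sum_delta p.2) !mulr_sumr -big_split /=.
by apply: eq_bigr => i _; ring.
Qed.

Lemma sandwich_value (s q : I -> R) :
  (forall p n, 0 < s p -> s n < 0 -> q n <= q p) ->
  exists t, (forall i, 0 < s i -> t <= q i) /\ (forall i, s i < 0 -> q i <= t).
Proof.
move=> qNP.
have [p0 sp0 | noP] := pickP [pred i | 0 < s i].
  have [m sm qm] := arg_minP q (P := [pred i | 0 < s i]) sp0.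
  by exists (q m); split=> [i /qm | i /(qNP _ _ sm)].
have [n0 sn0 | noN] := pickP [pred i | s i < 0].
  have [m sm qm] := arg_maxP q (P := [pred i | s i < 0]) sn0.
  by exists (q m); split=> [i si | i /qm]; [have := noP i; rewrite /= si |].
by exists 0; split=> i si; [have := noP i | have := noN i]; rewrite /= si.
Qed.

Lemma fm_lift (b r : I -> R) :
  (forall p, fm_comb r p <= fm_comb b p) ->
  exists t, forall i, a i j0 * t + r i <= b i.
Proof.
move=> comb_le.
pose q i := (b i - r i) / a i j0.
have aqE i : a i j0 != 0 -> a i j0 * q i = b i - r i by move=> ?; rewrite mulrC mulfVK.
have [t [tP tN]] : exists t, (forall i, 0 < a i j0 -> t <= q i) /\
                             (forall i, a i j0 < 0 -> q i <= t).
  apply: sandwich_value => p n ap an.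
  have := comb_le (p, n); rewrite /fm_comb /fm_lam /fm_mu /= (gt_eqF ap) ap an /=.
  move=> le_pn; rewrite -subr_ge0.
  have -> : q p - q n = (- a n j0 * (b p - r p) + a p j0 * (b n - r n)) / (- a n j0 * a p j0).
    by rewrite /q; field; rewrite (gt_eqF ap) (lt_eqF an).
  by apply: divr_ge0; [lra | rewrite ltW // mulr_gt0 // oppr_gt0].
exists t => i; case: (ltgtP (a i j0) 0) => ai.
- by have := tN i ai; rewrite -(ler_nM2l ai) aqE ?lt_eqF //; lra.
- by have := tP i ai; rewrite -(ler_pM2l ai) aqE ?gt_eqF //; lra.
- have := comb_le (i, i); rewrite /fm_comb /fm_lam /fm_mu /= ai !eqxx /=.
  by rewrite !mul1r !mul0r !addr0 ?mul0r ?add0r.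
Qed.

End FourierMotzkin.

Lemma farkas_supp n : forall (I : finType) (a : I -> J -> R) b (K : {set J}),
  (#|K| <= n)%N -> (forall i j, j \notin K -> a i j = 0) ->
  lp_feasible a b \/ farkas_certificate a b.
Proof.
elim: n => [|n IH] I a b K cardK aK.
  apply: farkas_zero_matrix => i j; apply: aK.
  by move: cardK; rewrite leqn0 => /eqP/cards0_eq ->; rewrite inE.
have [K0 | [j0 j0K]] := set_0Vmem K.
  by apply: farkas_zero_matrix => i j; apply: aK; rewrite K0 inE.
pose a' p j := fm_comb a j0 (fun i => a i j) p.
have cardK' : (#|K :\ j0| <= n)%N by move: cardK; rewrite (cardsD1 j0 K) j0K.
have a'K p j : j \notin K :\ j0 -> a' p j = 0.
  rewrite !inE negb_and negbK => /orP [/eqP -> | jK]; first exact: fm_comb_pivot.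
  by rewrite /a' /fm_comb !aK // !mulr0 addr0.
have [[x' x'P] | [y' [y'_ge0 [y'a y'b]]]] := IH _ a' (fm_comb a j0 b) _ cardK' a'K.
  left; pose x0 j := if j == j0 then 0 else x' j.
  have [t tP] : exists t, forall i, a i j0 * t + \sum_j a i j * x0 j <= b i.
    apply: fm_lift => p; have := x'P p.
    have -> : \sum_j a' p j * x' j = \sum_j a' p j * x0 j.
      apply: eq_bigr => j _; rewrite /x0; case: eqP => [-> | //].
      by rewrite /a' fm_comb_pivot !mul0r.
    suff -> : \sum_j a' p j * x0 j =
       fm_comb a j0 (fun i => \sum_j a i j * x0 j) p by [].
    rewrite /a' /fm_comb !mulr_sumr -big_split /=.
    by apply: eq_bigr => j _; ring.
  exists (fun j => if j == j0 then t else x' j) => i; apply: le_trans (tP i).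
  rewrite (bigD1 j0) // [X in _ <= _ + X](bigD1 j0) //= /x0 !eqxx mulr0 add0r.
  by rewrite lerD2l; apply: ler_sum => j /negbTE ->.
right; exists (fm_pullback a j0 y'); split; first exact: fm_pullback_ge0.
split=> [j|]; last by rewrite fm_pullbackE.
by rewrite (fm_pullbackE _ _ _ (fun i => a i j)); apply: y'a.
Qed.

Lemma farkas (I : finType) (a : I -> J -> R) b :
  lp_feasible a b \/ farkas_certificate a b.
Proof. by apply: (@farkas_supp #|J| I a b setT) => [|i j]; rewrite ?max_card ?inE. Qed.

End Farkas.

Lemma farkas_cone (R : realFieldType) (J K : finType) (M : K -> J -> R) (e : J -> R) :
  (forall x : J -> R, (forall j, 0 <= x j) ->
     (forall k, \sum_j M k j * x j = 0) -> \sum_j e j * x j <= 0) ->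
  exists z : K -> R, forall j, e j <= \sum_k z k * M k j.
Proof.
move=> cone_le0.
have [[z zP] | [x [x_ge0 [xM xe]]]] := farkas (fun j k => - M k j) (fun j => - e j).
  exists z => j; have -> : \sum_k z k * M k j = - \sum_k - M k j * z k.
    by rewrite -sumrN; apply: eq_bigr => k _; ring.
  by rewrite lerNr.
have Mx k : \sum_j M k j * x j = 0.
  have := xM k; under eq_bigr do rewrite mulrN; rewrite sumrN => /eqP.
  by rewrite oppr_eq0 => /eqP; apply: etrans; apply: eq_bigr => j _; rewrite mulrC.
have ex : \sum_j e j * x j = - \sum_j x j * - e j.
  by rewrite -sumrN; apply: eq_bigr => j _; ring.
have := cone_le0 x x_ge0 Mx; lra.
Qed.

(** * Faces and segments of G *)

Lemma simplex_pos (R : realFieldType) (A : finType) (p : A -> R) :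
  simplex p -> exists a, 0 < p a.
Proof.
case=> _ p1; apply/existsP; apply: contraT; rewrite negb_exists => /forallP nP.
suff : \sum_a p a <= 0 by rewrite p1 ler10.
by apply: sumr_le0 => a _; rewrite leNgt nP.
Qed.

Lemma simplex_point (R : realFieldType) (A : finType) (p : A -> R) a1 :
  simplex p -> (forall a, a != a1 -> p a = 0) -> p = fun a => (a == a1)%:R.
Proof.
case=> _ p1 p0; apply: functional_extensionality => a.
have [-> | /p0 //] := eqVneq a a1.
by rewrite -p1 (bigD1 a1) //= big1 ?addr0 // => b /p0.
Qed.

Lemma sum_simplex_off_pivot (R : realFieldType) (A : finType) (p : A -> R) (a0 a : A) :
  \sum_b p b = 1 ->
  \sum_(b | b != a0) p b * ((a == b)%:R - (a == a0)%:R) = p a - (a == a0)%:R.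
Proof.
move=> p1; under eq_bigr do rewrite mulrBr.
rewrite sumrB -mulr_suml.
have -> : \sum_(b | b != a0) p b = 1 - p a0 by move: p1; rewrite (bigD1 a0) //=; lra.
have [-> | aa0] := eqVneq a a0.
  rewrite big1 => [|b ba0]; last by rewrite eq_sym (negbTE ba0) mulr0.
  by rewrite mulr1 sub0r opprB.
rewrite (bigD1 a) //= eqxx mulr1 big1 ?addr0 ?mulr0 ?subr0 //.
by move=> b /andP [_ ba]; rewrite eq_sym (negbTE ba) mulr0.
Qed.

Section Observation.
Variables (R : realFieldType) (W S A : finType) (beta : W -> S -> R).
Hypothesis beta_kernel : kernel beta.

Local Notation dimU := (#|Uset beta| * (#|A| - 1))%N.

Lemma kernel_fbeta (pi : S -> A -> R) : kernel pi -> kernel (fbeta beta pi).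
Proof.
move=> pi_kernel w; split=> [a|].
  apply: sumr_ge0 => s _.
  by apply: mulr_ge0; [exact: (beta_kernel w).1 | exact: (pi_kernel s).1].
rewrite /fbeta exchange_big /=.
under eq_bigr => s _ do rewrite -mulr_sumr (pi_kernel s).2 mulr1.
exact: (beta_kernel w).2.
Qed.

Lemma Gset_simplex (g : W -> A -> R) w : Gset beta g -> simplex (g w).
Proof. by case=> pi [pi_kernel ->]; apply: kernel_fbeta. Qed.

Lemma beta_le0_eq0 w s : ~~ (0 < beta w s) -> beta w s = 0.
Proof. by rewrite lt0r negb_and negbK (beta_kernel w).1 orbF => /eqP. Qed.

Lemma beta_private_eq0 s w w' :
  s \notin Uset beta -> 0 < beta w s -> w' != w -> beta w' s = 0.
Proof.
rewrite inE -leqNgt => card_le1 bw w'w; apply: beta_le0_eq0; apply/negP => bw'.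
suff : (1 < #|[set w | (0 < beta w s)%R]|)%N by rewrite ltnNge card_le1.
by apply/card_gt1P; exists w', w; rewrite !inE bw bw' w'w.
Qed.

Lemma fbeta_pairing (l : W -> A -> R) (pi : S -> A -> R) :
  \sum_w \sum_a l w a * fbeta beta pi w a =
  \sum_s \sum_a pi s a * \sum_w l w a * beta w s.
Proof.
rewrite /fbeta; under eq_bigr do under eq_bigr do rewrite mulr_sumr.
rewrite exchange_big /=; under eq_bigr do rewrite exchange_big /=.
rewrite exchange_big /=; apply: eq_bigr => s _; apply: eq_bigr => a _.
by rewrite mulr_sumr; apply: eq_bigr => w _; ring.
Qed.

Definition move_mass (pi : S -> A -> R) (s : S) (a b : A) (t : R) : S -> A -> R :=
  fun s' a' => pi s' a' + (if s' == s then t * ((a' == a)%:R - (a' == b)%:R) else 0).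

Lemma kernel_move_mass pi s a b t :
  kernel pi -> - pi s a <= t <= pi s b -> kernel (move_mass pi s a b t).
Proof.
move=> pi_kernel /andP [ta tb] s'; split=> [a'|]; rewrite /move_mass.
  have [-> | _] := eqVneq s' s; last by rewrite addr0; exact: (pi_kernel s').1.
  have [-> | a'a] := eqVneq a' a.
    case: eqP => _; last by rewrite subr0 mulr1; lra.
    by rewrite subrr mulr0 addr0; exact: (pi_kernel s).1.
  rewrite sub0r; case: eqP => [-> | _]; first by rewrite mulrN1; lra.
  by rewrite oppr0 mulr0 addr0; exact: (pi_kernel s).1.
rewrite big_split /= (pi_kernel s').2; case: eqP => _; last by rewrite big1 ?addr0.
by rewrite -mulr_sumr sumrB !sum_delta1 subrr mulr0 addr0.
Qed.

Lemma fbeta_move_mass_private pi s w a b t :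
  s \notin Uset beta -> 0 < beta w s ->
  fbeta beta (move_mass pi s a b t) =
  fun w' a' => fbeta beta pi w' a' +
    (if w' == w then t * (beta w s * ((a' == a)%:R - (a' == b)%:R)) else 0).
Proof.
move=> sU bw; apply: functional_extensionality => w'; apply: functional_extensionality => a'.
rewrite /fbeta /move_mass; under eq_bigr do rewrite mulrDr.
rewrite big_split /=; congr (_ + _).
rewrite (bigD1 s) //= eqxx big1 ?addr0 => [|s' /negbTE ->]; last by rewrite mulr0.
have [-> | w'w] := eqVneq w' w; first by ring.
by rewrite (beta_private_eq0 sU bw w'w) mul0r.
Qed.

Definition coordinate_segment (g : W -> A -> R) (w0 : W) (v : A -> R) : Prop :=
  (exists a, v a != 0) /\
  forall t, -1 < t < 1 -> Gset beta (fun w a => g w a + (if w == w0 then t * v a else 0)).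

Lemma private_segment pi s w a b : kernel pi -> s \notin Uset beta -> 0 < beta w s ->
  a != b -> 0 < pi s a -> 0 < pi s b ->
  coordinate_segment (fbeta beta pi) w
    (fun a' => Num.min (pi s a) (pi s b) * (beta w s * ((a' == a)%:R - (a' == b)%:R))).
Proof.
move=> pi_kernel sU bw ab pa pb; set m := Num.min _ _.
have m_gt0 : 0 < m by rewrite lt_min pa pb.
have [ma mb] : m <= pi s a /\ m <= pi s b by split; rewrite ge_min lexx ?orbT.
split=> [|t /andP [t_gtN1 t_lt1]].
  by exists a; rewrite eqxx (negbTE ab) subr0 mulr1 mulf_neq0 ?gt_eqF.
have [tm_ge tm_le] : - m <= t * m /\ t * m <= m by split; nra.
exists (move_mass pi s a b (t * m)); split.
  by apply: kernel_move_mass => //; apply/andP; split; lra.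
rewrite (@fbeta_move_mass_private pi s w a b (t * m) sU bw).
apply: functional_extensionality => w'; apply: functional_extensionality => a'.
by case: eqP => _ //; congr (_ + _); ring.
Qed.

Definition deterministic_private (g : W -> A -> R) : Prop :=
  forall pi, kernel pi -> fbeta beta pi = g ->
  forall s w, s \notin Uset beta -> 0 < beta w s ->
  forall a b, 0 < pi s a -> 0 < pi s b -> a = b.

Definition excluded (pi : S -> A -> R) (s : S) (a : A) : bool :=
  [&& s \notin Uset beta, [exists w, 0 < beta w s] & pi s a == 0].

Lemma excluded_mass_ge0 pi (x : S -> A -> R) s :
  (forall a, 0 <= x s a) -> 0 <= \sum_a (excluded pi s a)%:R * x s a.
Proof. by move=> x_ge0; apply: sumr_ge0 => a _; rewrite mulr_ge0 ?ler0n. Qed.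

Lemma averaged_representation pi (x : S -> A -> R) (lam : R) :
  kernel pi -> 0 < lam -> (forall s a, 0 <= x s a) -> (forall s, \sum_a x s a = lam) ->
  (forall w a, \sum_s beta w s * x s a = lam * fbeta beta pi w a) ->
  kernel (fun s a => (pi s a + x s a / lam) / 2) /\
  fbeta beta (fun s a => (pi s a + x s a / lam) / 2) = fbeta beta pi.
Proof.
move=> pi_kernel lam_gt0 x_ge0 x_rows x_cols; split=> [s|].
  split=> [a|].
    apply: divr_ge0 => //; apply: addr_ge0; first exact: (pi_kernel s).1.
    exact: divr_ge0 (x_ge0 s a) (ltW lam_gt0).
  rewrite -mulr_suml big_split /= (pi_kernel s).2 -mulr_suml x_rows divff ?gt_eqF //.
  lra.
apply: functional_extensionality => w; apply: functional_extensionality => a.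
have -> : fbeta beta (fun s a => (pi s a + x s a / lam) / 2) w a =
          (fbeta beta pi w a + (\sum_s beta w s * x s a) / lam) / 2.
  rewrite /fbeta mulrDl !mulr_suml -big_split /=.
  by apply: eq_bigr => s _; field; rewrite gt_eqF.
by rewrite x_cols; field; rewrite gt_eqF.
Qed.

Lemma excluded_mass_le0 pi (x : S -> A -> R) (lam : R) :
  kernel pi -> deterministic_private (fbeta beta pi) ->
  (forall s a, 0 <= x s a) -> (forall s, \sum_a x s a = lam) ->
  (forall w a, \sum_s beta w s * x s a = lam * fbeta beta pi w a) ->
  \sum_s \sum_a (excluded pi s a)%:R * x s a <= 0.
Proof.
move=> pi_kernel det x_ge0 x_rows x_cols; rewrite leNgt; apply/negP => mass_gt0.
have /psumr_neq0P [s _|s0 /= s0_pos] := elimN eqP (lt0r_neq0 mass_gt0).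
  exact: excluded_mass_ge0.
have /psumr_neq0P [a _|b0 /= ] := elimN eqP (lt0r_neq0 s0_pos).
  by rewrite mulr_ge0 ?ler0n.
have [exc | _] := boolP (excluded pi s0 b0); last by rewrite mul0r ltxx.
rewrite mul1r => x_pos; case/and3P: exc => s0U /existsP [w0 bw0] /eqP pi0.
have lam_gt0 : 0 < lam.
  rewrite -(x_rows s0) (bigD1 b0) //=; apply: ltr_wpDr x_pos.
  by apply: sumr_ge0 => a _.
have [pi'_kernel pi'_fbeta] := averaged_representation pi_kernel lam_gt0 x_ge0 x_rows x_cols.
have [a1 pa1] := simplex_pos (pi_kernel s0).
suff a1b0 : a1 = b0 by move: pa1; rewrite a1b0 pi0 ltxx.
apply: (det _ pi'_kernel pi'_fbeta s0 w0) => //.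
  by have := divr_ge0 (x_ge0 s0 a1) (ltW lam_gt0); lra.
by have := divr_gt0 x_pos lam_gt0; rewrite pi0; lra.
Qed.

Lemma pairing_bound (l : W -> A -> R) (c : S -> R) (E : S -> A -> R) :
  (forall s a, E s a <= c s - \sum_w l w a * beta w s) ->
  forall pi, kernel pi ->
  \sum_w \sum_a l w a * fbeta beta pi w a + \sum_s \sum_a E s a * pi s a <= \sum_s c s.
Proof.
move=> E_le pi pi_kernel; rewrite fbeta_pairing -big_split /=; apply: ler_sum => s _.
rewrite -big_split /= -[c s]mul1r -(pi_kernel s).2 mulr_suml; apply: ler_sum => a _.
by have := E_le s a; have := (pi_kernel s).1 a; nra.
Qed.

Lemma exclusion_functional pi : kernel pi -> deterministic_private (fbeta beta pi) ->
  exists l : W -> A -> R, forall pi', kernel pi' ->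
    \sum_w \sum_a l w a * fbeta beta pi' w a + \sum_s \sum_a (excluded pi s a)%:R * pi' s a
    <= \sum_w \sum_a l w a * fbeta beta pi w a.
Proof.
move=> pi_kernel det; set g := fbeta beta pi.
(* The cone {x >= 0 | M x = 0} consists of the rescaled representations
   (x(s, .), x(tt)) of g; the excluded mass vanishes on it, so by Farkas the
   indicator [e] of excluded pairs is dominated by a combination z of the rows
   of M, and the (w, a)-rows of z give the functional. *)
pose M (k : S + W * A) (j : S * A + unit) : R :=
  match k, j with
  | inl s, inl p => (p.1 == s)%:R
  | inl _, inr _ => -1
  | inr q, inl p => (p.2 == q.2)%:R * beta q.1 p.1
  | inr q, inr _ => - g q.1 q.2
  end.
pose e (j : S * A + unit) : R := if j is inl p then (excluded pi p.1 p.2)%:R else 0.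
have [z zP] : exists z, forall j, e j <= \sum_k z k * M k j.
  apply: farkas_cone => x x_ge0 Mx.
  have x_rows s : \sum_a x (inl (s, a)) = x (inr tt).
    have := Mx (inl s); rewrite big_sumType sum_unit sum_pair /=.
    under eq_bigr do rewrite -mulr_sumr.
    by rewrite sum_delta; lra.
  have x_cols w a : \sum_s beta w s * x (inl (s, a)) = x (inr tt) * g w a.
    have := Mx (inr (w, a)); rewrite big_sumType sum_unit sum_pair /=.
    under eq_bigr => s _ do under eq_bigr => a' _ do rewrite -mulrA.
    by under eq_bigr do rewrite sum_delta; lra.
  have := excluded_mass_le0 pi_kernel det (fun s a => x_ge0 (inl (s, a))) x_rows x_cols.
  by rewrite big_sumType sum_unit sum_pair /= mul0r addr0.
exists (fun w a => - z (inr (w, a))) => pi' pi'_kernel.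
apply: le_trans (pairing_bound (c := fun s => z (inl s)) _ pi'_kernel) _.
  move=> s a; have := zP (inl (s, a)); rewrite big_sumType sum_pair /=.
  under eq_bigr do rewrite mulrC eq_sym.
  rewrite sum_delta.
  under eq_bigr => w _ do under eq_bigr => a' _ do rewrite mulrCA eq_sym.
  under eq_bigr do rewrite sum_delta.
  by under [X in _ <= _ - X]eq_bigr do rewrite mulNr; rewrite sumrN opprK.
have := zP (inr tt); rewrite /= big_sumType sum_pair /=.
under eq_bigr do rewrite mulrN1.
under [X in _ <= _ + X]eq_bigr do under eq_bigr do rewrite mulrN -mulNr.
by rewrite sumrN; lra.
Qed.

Lemma affdim_fbeta_free (T : {set S}) (pi : S -> A -> R) (F : (W -> A -> R) -> Prop) :
  (forall x, F x -> exists pi', [/\ kernel pi', x = fbeta beta pi' &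
     forall s w, s \notin T -> 0 < beta w s -> pi' s = pi s]) ->
  affdim_le F (#|T| * (#|A| - 1)).
Proof.
move=> F_sub; have [a0 _ | A0] := pickP (@predT A); last first.
  by exists (fun _ _ => 0), (fun _ _ _ => 0) => x _; exists (fun _ => 0) => w a; have := A0 a.
pose X := setX T [set~ a0].
rewrite (_ : (_ * _)%N = #|X|); last by rewrite cardsX cardsC1 subn1.
pose pi0 s a := if s \in T then (a == a0)%:R else pi s a.
pose dir (p : S * A) w a := beta w p.1 * ((a == p.2)%:R - (a == a0)%:R).
exists (fbeta beta pi0), (fun i => dir (enum_val i)).
move=> x /F_sub [pi' [pi'_kernel -> pi'_pi]].
exists (fun i => pi' (enum_val i).1 (enum_val i).2) => w a.
rewrite -(big_enum_val (A := mem X) (fun p => pi' p.1 p.2 * dir p w a)) /=.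
rewrite (eq_bigl (fun p => (p.1 \in T) && (p.2 \in [set~ a0]))) => [|[s b]]; last first.
  by rewrite /X in_setX.
rewrite -(pair_big (mem T) (mem [set~ a0]) (fun s b => pi' s b * dir (s, b) w a)) /=.
have -> : \sum_(s in T) \sum_(b in [set~ a0]) pi' s b * dir (s, b) w a =
          \sum_(s in T) beta w s * (pi' s a - (a == a0)%:R).
  apply: eq_bigr => s _; rewrite -(sum_simplex_off_pivot a0 a (pi'_kernel s).2) mulr_sumr.
  rewrite (eq_bigl (fun b => b != a0)) => [|b]; last by rewrite in_setC1.
  by apply: eq_bigr => b _; rewrite /dir; ring.
rewrite big_mkcond /fbeta -big_split /=; apply: eq_bigr => s _.
rewrite /pi0; case: ifP => sT; first by ring.
rewrite addr0; have [bw | /beta_le0_eq0 ->] := boolP (0 < beta w s); last by rewrite !mul0r.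
by rewrite (pi'_pi s w) ?sT.
Qed.

Lemma kernel_excluded_mass_ge0 pi (pi' : S -> A -> R) :
  kernel pi' -> 0 <= \sum_s \sum_a (excluded pi s a)%:R * pi' s a.
Proof.
move=> pi'_kernel; apply: sumr_ge0 => s _.
exact (excluded_mass_ge0 pi ((pi'_kernel s).1)).
Qed.

Lemma excluded_mass_eq0 pi (pi' : S -> A -> R) s a : kernel pi' ->
  \sum_s \sum_a (excluded pi s a)%:R * pi' s a = 0 -> excluded pi s a -> pi' s a = 0.
Proof.
move=> pi'_kernel mass_eq0 exc.
have row_eq0 : \sum_b (excluded pi s b)%:R * pi' s b = 0.
  apply: (psumr_eq0P _ mass_eq0) => // s' _.
  exact (excluded_mass_ge0 pi ((pi'_kernel s').1)).
have : (excluded pi s a)%:R * pi' s a = 0.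
  by apply: (psumr_eq0P _ row_eq0) => // b _; rewrite mulr_ge0 ?ler0n ?(pi'_kernel s).1.
by rewrite exc mul1r.
Qed.

Lemma deterministic_private_agree pi (pi' : S -> A -> R) :
  kernel pi -> deterministic_private (fbeta beta pi) -> kernel pi' ->
  (forall s a, excluded pi s a -> pi' s a = 0) ->
  forall s w, s \notin Uset beta -> 0 < beta w s -> pi' s = pi s.
Proof.
move=> pi_kernel det pi'_kernel pi'_excluded s w sU bw.
have [a1 pa1] := simplex_pos (pi_kernel s).
have pi_a1 a : a != a1 -> pi s a = 0.
  move=> aa1; apply/eqP; rewrite eq_le (pi_kernel s).1 andbT leNgt; apply/negP => pa.
  by move: aa1; rewrite (det pi pi_kernel erefl s w sU bw a a1 pa pa1) eqxx.
have pi'_a1 a : a != a1 -> pi' s a = 0.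
  move=> aa1; apply: pi'_excluded.
  by rewrite /excluded sU pi_a1 // eqxx andbT; apply/existsP; exists w.
by rewrite (simplex_point (pi_kernel s) pi_a1) (simplex_point (pi'_kernel s) pi'_a1).
Qed.

Definition small_point (g : W -> A -> R) : Prop :=
  exists F, face (Gset beta) F /\ F g /\ affdim_le F dimU.

Lemma small_point_deterministic pi :
  kernel pi -> deterministic_private (fbeta beta pi) -> small_point (fbeta beta pi).
Proof.
move=> pi_kernel det; have [l l_bound] := exclusion_functional pi_kernel det.
set c := \sum_w \sum_a l w a * fbeta beta pi w a.
exists (fun x => Gset beta x /\ \sum_w \sum_a l w a * x w a = c); split; last split.
- exists l, c; split=> // y [pi' [pi'_kernel ->]].
  have := l_bound _ pi'_kernel; rewrite -/c.
  by have := kernel_excluded_mass_ge0 pi pi'_kernel; lra.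
- by split=> //; exists pi.
apply: (@affdim_fbeta_free _ pi) => x [[pi' [pi'_kernel ->]] on_face].
exists pi'; split=> //; apply: deterministic_private_agree => // s a.
apply: excluded_mass_eq0 => //; apply/eqP; rewrite eq_le kernel_excluded_mass_ge0 // andbT.
by have := l_bound _ pi'_kernel; rewrite on_face -/c; lra.
Qed.

Lemma small_or_segment g :
  Gset beta g -> small_point g \/ exists w0 v, coordinate_segment g w0 v.
Proof.
case=> pi [pi_kernel ->].
have [det | not_det] := classic (deterministic_private (fbeta beta pi)).
  by left; apply: small_point_deterministic.
right; apply: NNPP => no_segment; apply: not_det => pi' pi'_kernel pi'_pi s w sU bw a b pa pb.
apply: NNPP => /eqP ab; apply: no_segment; rewrite -pi'_pi.
by exists w; apply: ex_intro; exact: private_segment pi'_kernel sU bw ab pa pb.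
Qed.

Lemma small_point_Gset g : small_point g -> Gset beta g.
Proof. by case=> F [[l [c [_ F_face]]] [/F_face []]]. Qed.

Lemma segment_Gset g w0 v : coordinate_segment g w0 v -> Gset beta g.
Proof.
case=> _ /(_ 0); rewrite ltrN10 ltr01 => /(_ isT).
congr Gset; apply: functional_extensionality => w.
by apply: functional_extensionality => a; rewrite mul0r if_same addr0.
Qed.

Definition segment_data : Type :=
  {x : (W -> A -> R) * W * (A -> R) | coordinate_segment x.1.1 x.1.2 x.2}.

Definition piece_index : Type := ({g | small_point g} + segment_data)%type.

Definition piece (th : piece_index) (w : W) (p : A -> R) : Prop :=
  match th with
  | inl g => p = sval g w
  | inr x => let: (g, w0, v) := sval x in
      if w == w0 then exists t, -1 < t < 1 /\ p = (fun a => g w a + t * v a)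
      else p = g w
  end.

Lemma Gset_pieces g : Gset beta g <-> exists th, forall w, piece th w (g w).
Proof.
split=> [/small_or_segment [small | [w0 [v seg]]] | [th g_piece]].
- by exists (inl (exist _ g small)).
- exists (inr (exist _ (g, w0, v) seg)) => w /=; case: eqP => // ->.
  exists 0; rewrite ltrN10 ltr01; split=> //.
  by apply: functional_extensionality => a; rewrite mul0r addr0.
case: th g_piece => [[g0 small] | [[[g0 w0] v] seg]] /= g_piece.
- suff -> : g = g0 by exact: small_point_Gset.
  by apply: functional_extensionality => w; exact: g_piece.
- have := g_piece w0; rewrite eqxx => -[t [t_bound gw0]].
  suff -> : g = fun w a => g0 w a + (if w == w0 then t * v a else 0).
    exact: seg.2 t t_bound.
  apply: functional_extensionality => w; apply: functional_extensionality => a.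
  have := g_piece w; case: eqP => [-> _ | _ ->]; first by rewrite gw0.
  by rewrite addr0.
Qed.

Lemma piece_simplex th w p : piece th w p -> simplex p.
Proof.
case: th => [[g /small_point_Gset g_G] | [[[g w0] v] seg]] /=.
  by move=> ->; exact: Gset_simplex.
case: eqP => [-> [t [t_bound ->]] | _ ->]; last exact/Gset_simplex/segment_Gset/seg.
by have := Gset_simplex w0 (seg.2 t t_bound); rewrite eqxx.
Qed.

Lemma piece_convex th w : convex_set (piece th w).
Proof.
move=> x y s; case: th => [[g small] | [[[g w0] v] seg]] /=.
  by move=> -> -> _; apply: functional_extensionality => a; ring.
case: eqP => _; last by move=> -> -> _; apply: functional_extensionality => a; ring.
move=> [t1 [t1_bound ->]] [t2 [t2_bound ->]] s_bound.
exists (s * t1 + (1 - s) * t2); split; first exact: convex_combination_in_interval.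
by apply: functional_extensionality => a; ring.
Qed.

Lemma segment_piece_no_vertex (x : segment_data) g :
  ~ vertex (fun g => forall w, piece (inr x) w (g w)) g.
Proof.
case: x => [[[g0 w0] v] seg] [g_piece g_extreme]; have [[a va] _] := seg.
have := g_piece w0; rewrite /= eqxx => -[t [/andP [t_gtN1 t_lt1] gw0]].
pose m := (1 - t) * (1 + t) / 2.
have m_gt0 : 0 < m by rewrite divr_gt0 // mulr_gt0 //; lra.
have [m_lt1 m_lt2] : m < 1 - t /\ m < 1 + t by rewrite /m; split; nra.
pose y d w a := g w a + (if w == w0 then d * v a else 0).
have y_piece d : -1 < t + d < 1 -> forall w, piece (inr (exist _ (g0, w0, v) seg)) w (y d w).
  move=> d_bound w; have := g_piece w; rewrite /= /y; case: eqP => [-> _ | _ ->].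
    exists (t + d); split=> //; apply: functional_extensionality => a'.
    by rewrite gw0 /=; ring.
  by apply: functional_extensionality => a'; rewrite addr0.
have g_mid : g = fun w a => 1 / 2 * y m w a + (1 - 1 / 2) * y (- m) w a.
  apply: functional_extensionality => w; apply: functional_extensionality => a'.
  by rewrite /y; case: eqP => _; field.
have [y_eq _] := g_extreme (y m) (y (- m)) (1 / 2)
  (y_piece m ltac:(apply/andP; split; lra)) (y_piece (- m) ltac:(apply/andP; split; lra))
  ltac:(apply/andP; split; lra) g_mid.
have := congr1 (fun f => f w0 a) y_eq; rewrite /y eqxx => mva.
have /eqP : m * v a = 0 by lra.
by rewrite mulf_eq0 (negbTE va) orbF gt_eqF.
Qed.

Lemma piece_vertex th g :
  vertex (fun g => forall w, piece th w (g w)) g -> small_point g.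
Proof.
case: th => [[g0 small] | x] g_vertex; last by case: (segment_piece_no_vertex g_vertex).
suff -> : g = g0 by [].
by apply: functional_extensionality => w; exact: g_vertex.1 w.
Qed.

End Observation.

Theorem proposition5 (R : realFieldType) (W S A : finType) (beta : W -> S -> R) :
  kernel beta ->
  exists (Theta : Type) (Gt : Theta -> W -> (A -> R) -> Prop),
    (forall g, Gset beta g <-> exists th, forall w, Gt th w (g w)) /\
    (forall th w, (forall p, Gt th w p -> simplex p) /\ convex_set (Gt th w)) /\
    (forall th x, vertex (fun g => forall w, Gt th w (g w)) x ->
       exists F, face (Gset beta) F /\ F x /\
         affdim_le F (#|Uset beta| * (#|A| - 1))%N).
Proof.
move=> beta_kernel; exists (@piece_index R W S A beta), (@piece R W S A beta).
split; first exact: Gset_pieces.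
split; last exact: piece_vertex.
by move=> th w; split; [exact: piece_simplex | exact: piece_convex].
Qed.
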